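(* Let $X,Y$ be finite-dimensional Banach spaces over $\mathbb{K}\in\{\mathbb{R},\mathbb{C}\}$, let $G\in L(X,Y)$ with $\|G\|=1$, and let $T\in L(X,Y)$. Then (i) $S_G(T)=\{ y^*(Tx):x\in S_X,\ y^*\in S_{Y^*},\ \|Gx\|= 1 \}$; (ii) $V_G(T)=\{y^*(Tx):x\in S_X,\ y^*\in S_{Y^*},\ y^*(Gx)= 1 \}$.
   Context: $S_X$ denotes the unit sphere of $X$ and $Y^*$ the dual of $Y$. For $T\in L(X,Y)$: $S_G(T):=\bigcap_{\delta>0}\overline{\{y^*(Tx): x\in S_X,\ y^*\in S_{Y^*},\ \|Gx\|>1-\delta\}}$ and $V_G(T):=\bigcap_{\delta>0}\overline{\{y^*(Tx): x\in S_X,\ y^*\in S_{Y^*},\ \operatorname{Re} y^*(Gx)>1-\delta\}}$ (the numerical range of $T$ with respect to $G$). *)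

From HB Require Import structures.
From mathcomp Require Import all_boot all_order all_algebra.
From mathcomp Require Import all_classical all_reals topology normedtype.
From mathcomp Require Import complex.
Set Implicit Arguments. Unset Strict Implicit. Unset Printing Implicit Defensive.
Import Order.TTheory GRing.Theory Num.Theory.
Import numFieldNormedType.Exports.
Local Open Scope classical_set_scope.
Local Open Scope ring_scope.

Definition findim (K : numDomainType) (V : lmodType K) : Prop :=
  exists (n : nat) (e : 'I_n -> V),
    forall v : V, exists c : 'I_n -> K, v = \sum_(i < n) c i *: e i.

Definition unit_sphere (K : numDomainType) (V : normedModType K) : set V :=
  [set x | `|x| = 1].

Definition opnorm_eq1 (K : numFieldType) (U V : normedModType K) (f : U -> V) : Prop :=
  (forall x : U, `|x| <= 1 -> `|f x| <= 1) /\
  (forall c : K, c < 1 -> exists x : U, `|x| <= 1 /\ c < `|f x|).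

Definition dual_unit (K : numFieldType) (Y : normedModType K) (ys : {linear Y -> K^o}) : Prop :=
  (forall y : Y, `|y| <= 1 -> `|(ys y : K)| <= 1) /\
  (forall c : K, c < 1 -> exists y : Y, `|y| <= 1 /\ c < `|(ys y : K)|).

Section NumRanges.
Variables (K : numFieldType) (X Y : normedModType K).

Definition SG (G T : {linear X -> Y}) : set K :=
  \bigcap_(d in [set d : K | 0 < d])
    closure [set z : K | exists (x : X) (ys : {linear Y -> K^o}),
      `|x| = 1 /\ dual_unit ys /\ 1 - d < `|G x| /\ z = ys (T x)].

(* V_G(T); [re] is the real-part map of K (identity for K = R). *)
Definition VG (re : K -> K) (G T : {linear X -> Y}) : set K :=
  \bigcap_(d in [set d : K | 0 < d])
    closure [set z : K | exists (x : X) (ys : {linear Y -> K^o}),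
      `|x| = 1 /\ dual_unit ys /\ 1 - d < re (ys (G x)) /\ z = ys (T x)].
End NumRanges.

Definition prop2p4_stmt (K : numFieldType) (re : K -> K) : Prop :=
  forall (X Y : normedModType K), findim X -> findim Y ->
  forall (G T : {linear X -> Y}), opnorm_eq1 G ->
    SG G T = [set z : K | exists (x : X) (ys : {linear Y -> K^o}),
      `|x| = 1 /\ dual_unit ys /\ `|G x| = 1 /\ z = ys (T x)] /\
    VG re G T = [set z : K | exists (x : X) (ys : {linear Y -> K^o}),
      `|x| = 1 /\ dual_unit ys /\ ys (G x) = 1 /\ z = ys (T x)].

From HB Require Import structures.
From mathcomp Require Import all_boot all_order all_algebra.
From mathcomp Require Import all_classical all_reals topology normedtype sequences.
From mathcomp Require Import complex.
Import Order.TTheory GRing.Theory Num.Theory.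
Import numFieldNormedType.Exports.
Set Implicit Arguments.
Unset Strict Implicit.
Unset Printing Implicit Defensive.
Local Open Scope classical_set_scope.
Local Open Scope ring_scope.

(* A point z of S_G(T) (resp. V_G(T)) is a limit of values y_k^*(T x_k) with
   x_k in S_X, y_k^* in S_{Y^*} and ||G x_k|| (resp. Re y_k^*(G x_k)) tending
   to 1.  In finite dimension the unit sphere of X is sequentially compact, and
   so is the dual sphere for pointwise convergence: a subsequence of
   (x_k, y_k^* ) converges to such a pair (x, y^* ), and then z = y^*(T x) with
   ||G x|| = 1 (resp. Re y^*(G x) >= 1 and |y^*(G x)| <= 1, whence
   y^*(G x) = 1).  Compactness reduces to Bolzano-Weierstrass in K through a
   bound |c_i| <= C ||x|| on the coefficients of x over a finite spanning
   family, proved by induction on the family: a new vector either lies in the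
   span of the previous ones or is at positive distance from it. *)

Lemma increasing_seq_comp (f g : nat -> nat) :
  increasing_seq f -> increasing_seq g -> increasing_seq (f \o g).
Proof. by move=> incf incg m n; exact: etrans (incf _ _) (incg m n). Qed.

Lemma increasing_seq_cvgy (f : nat -> nat) : increasing_seq f -> f @ \oo --> \oo.
Proof.
move=> incf; apply/cvgnyPge => N; near=> n.
have geq_id k : (k <= f k)%N.
  elim: k => [//|k IHk]; apply: leq_ltn_trans IHk _.
  by have /increasing_seqP := incf; apply.
apply: leq_trans (geq_id n); near: n; exact: nbhs_infty_ge.
Unshelve. all: by end_near. Qed.

Lemma cvg_subseq {T : topologicalType} (u : nat -> T) (l : T) (f : nat -> nat) :
  increasing_seq f -> u @ \oo --> l -> u \o f @ \oo --> l.
Proof. by move=> /increasing_seq_cvgy; apply: cvg_comp. Qed.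

Section scalar_sequences.
Variable K : numFieldType.

Lemma cvg_ge0 (u : K^nat) (l : K) : (forall n, 0 <= u n) -> u @ \oo --> l -> 0 <= l.
Proof.
move=> u_ge0 ul; suff <- : `|l| = l by [].
apply: (norm_cvg_unique (cvg_norm ul)) => /=.
by rewrite (_ : (fun n => _) = u) // funeqE => n; rewrite ger0_norm.
Qed.

Lemma ler_cvg (u v : K^nat) (a b : K) :
  (forall n, u n <= v n) -> u @ \oo --> a -> v @ \oo --> b -> a <= b.
Proof.
move=> uv ua vb; rewrite -subr_ge0.
by apply: cvg_ge0 (cvgB vb ua) => n; rewrite subr_ge0.
Qed.

Lemma closure_dist_lt (A : set K) (z e : K) :
  closure A z -> 0 < e -> exists2 a, A a & `|z - a| < e.
Proof.
move=> Az e0; have [a [Aa za]] := Az _ (nbhsx_ballx z e e0).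
by exists a; rewrite // -ball_normE.
Qed.

Lemma approx_cvg_ge1 (e u : K^nat) (a : K) :
  e @ \oo --> 0 -> (forall k, 1 - e k < u k) -> u @ \oo --> a -> 1 <= a.
Proof.
move=> e0 eu ua; apply: (ler_cvg (fun k => ltW (eu k)) _ ua).
by rewrite -[X in _ --> X]subr0; exact: cvgB (cvg_cst _) e0.
Qed.

Lemma cvg_nonexpansive (f : K -> K) (u : K^nat) (l : K) :
  (forall a b, `|f a - f b| <= `|a - b|) -> u @ \oo --> l -> f \o u @ \oo --> f l.
Proof.
move=> f_le ul; apply/cvgrPdist_lt => e e0; near=> n.
by rewrite (le_lt_trans (f_le _ _)) //; near: n; apply: cvgr_dist_lt.
Unshelve. all: by end_near. Qed.

End scalar_sequences.

Section dual_functionals.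
Variable K : numFieldType.

Lemma linear_le_norm (U W : normedModType K) (f : {linear U -> W}) :
  (forall x, `|x| <= 1 -> `|f x| <= 1) -> forall x, `|f x| <= `|x|.
Proof.
move=> f_le1 x; have [->|x0] := eqVneq x 0; first by rewrite linear0 !normr0.
have nx0 : 0 < `|x| by rewrite normr_gt0.
have := f_le1 (`|x|^-1 *: x); rewrite linearZ !normrZ ger0_norm ?invr_ge0 //.
rewrite mulVf ?gt_eqF // lexx => /(_ isT).
by rewrite -(ler_pM2l nx0) mulrA mulfV ?gt_eqF // mul1r mulr1.
Qed.

Lemma cvg_dual_apply (V : normedModType K) (ys : nat -> {linear V -> K^o})
    (g : V -> K^o) (xs : V^nat) (x : V) :
  (forall k y, `|ys k y| <= `|y|) -> xs @ \oo --> x ->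
  (forall y, ys k y @[k --> \oo] --> g y) -> ys k (xs k) @[k --> \oo] --> g x.
Proof.
move=> ys_le xsx ysg; apply/cvgrPdist_lt => e e0; near=> k.
rewrite -(subrKA (ys k x)) (le_lt_trans (ler_normD _ _)) // (splitr e) ltrD //.
  by near: k; apply: cvgr_dist_lt; rewrite // divr_gt0.
rewrite -linearB (le_lt_trans (ys_le _ _)) //.
by near: k; apply: cvgr_dist_lt; rewrite // divr_gt0.
Unshelve. all: by end_near. Qed.

Lemma dual_unit_le_norm (V : normedModType K) (ys : {linear V -> K^o}) :
  dual_unit ys -> forall y, `|ys y| <= `|y|.
Proof. by move=> [ys_le1 _]; exact: linear_le_norm. Qed.

End dual_functionals.

Section finite_dimension.
Variable K : numFieldType.
(* All that is used of K = R, C: it is Archimedean and Bolzano-Weierstrass holds. *)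
Hypothesis harmonic_cvg0 : @harmonic K @ \oo --> 0.
Hypothesis bolzano : forall (u : K^nat) (M : K),
  (forall n, `|u n| <= M) -> exists2 f : nat -> nat, increasing_seq f & cvgn (u \o f).

Lemma cvg_harmonic_dist (V : pseudoMetricNormedZmodType K) (u : V^nat) (l : V) :
  (forall n, `|l - u n| < harmonic n) -> u @ \oo --> l.
Proof.
move=> ul; apply/cvgrPdist_lt => e e0; near=> n; apply: lt_trans (ul n) _.
near: n; apply: filterS (cvgr_dist_lt _ _ harmonic_cvg0 _ e0) => n.
by rewrite sub0r normrN gtr0_norm ?harmonic_gt0.
Unshelve. all: by end_near. Qed.

Lemma bounded_seqs_subseq (m : nat) (u : nat -> K^nat) (M : nat -> K) :
  (forall i n, (i < m)%N -> `|u i n| <= M i) ->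
  exists2 f : nat -> nat, increasing_seq f &
    exists a : nat -> K, forall i, (i < m)%N -> u i \o f @ \oo --> a i.
Proof.
elim: m => [|m IHm] uM; first by exists id => //; exists (fun=> 0).
have [f incf [a ua]] := IHm (fun i n im => uM i n (ltnW im)).
have [g incg /cvg_ex[b ub]] := bolzano (fun n => uM m (f n) (ltnSn m)).
exists (f \o g); first exact: increasing_seq_comp.
exists (fun i => if i == m then b else a i) => i; rewrite ltnS leq_eqVlt.
by case: eqP => [-> //|_ /= im]; exact: cvg_subseq (ua i im).
Qed.

Section finite_span.
Variable V : normedModType K.

Definition finspan (n : nat) (e : nat -> V) : set V :=
  [set x | exists c : nat -> K, x = \sum_(i < n) c i *: e i].

Definition coef_bound (n : nat) (e : nat -> V) (C : K) :=
  0 <= C /\ forall x, finspan n e x -> exists c : nat -> K,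
    x = \sum_(i < n) c i *: e i /\ forall i, (i < n)%N -> `|c i| <= C * `|x|.

Lemma finspan_cvg_subseq n e C (u : V^nat) (M : K) :
  coef_bound n e C -> (forall k, finspan n e (u k)) ->
  (forall k, `|u k| <= M) ->
  exists2 f : nat -> nat, increasing_seq f &
    exists2 x, finspan n e x & u \o f @ \oo --> x.
Proof.
move=> [C0 eC] ue uM.
have /choice[c uc] : forall k, exists c : nat -> K, u k = \sum_(i < n) c i *: e i /\
    forall i, (i < n)%N -> `|c i| <= C * `|u k| by move=> k; exact: eC.
have [f incf [a ca]] := @bounded_seqs_subseq n (fun i k => c k i) (fun=> C * M)
  (fun i k i_n => le_trans ((uc k).2 i i_n) (ler_wpM2l C0 (uM k))).
exists f => //; exists (\sum_(i < n) a i *: e i); first by exists a.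
have -> : u \o f = fun k => \sum_(i < n) c (f k) i *: e i.
  by apply/funext => k; rewrite /= -(uc _).1.
apply: cvg_big; first exact: add_continuous.
by move=> i _; apply: cvgZr_tmp; exact: ca.
Qed.

Lemma finspanZ n e (a : K) w : finspan n e w -> finspan n e (a *: w).
Proof.
move=> [c ->]; exists (fun i => a * c i); rewrite scaler_sumr.
by apply: eq_bigr => i _; rewrite scalerA.
Qed.

Lemma finspan_dist_gt0 n e C (v : V) : coef_bound n e C -> ~ finspan n e v ->
  exists2 d, 0 < d & forall w, finspan n e w -> d <= `|v - w|.
Proof.
move=> eC vNe; apply: contrapT => Nsep.
have /choice[w vw] : forall k, exists w, finspan n e w /\ `|v - w| < harmonic k.
  move=> k; apply: contrapT => /forallNP Nw; apply: Nsep.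
  exists (harmonic k) => [|w ew]; first exact: harmonic_gt0.
  apply/negbNE/negP.
  by rewrite -real_ltNge ?normr_real ?gtr0_real ?harmonic_gt0 // => vw; apply: (Nw w).
have wv : w @ \oo --> v by apply: cvg_harmonic_dist => // k; exact: (vw k).2.
have w_bounded k : `|w k| <= `|v| + 1.
  rewrite -[w k](subKr v) (le_trans (ler_normB _ _)) // lerD2l ltW //.
  by rewrite (lt_le_trans (vw k).2) // invf_le1 ?ler1n.
have [f incf [x ex wx]] := finspan_cvg_subseq eC (fun k => (vw k).1) w_bounded.
by apply: vNe; rewrite (cvg_unique _ (cvg_subseq incf wv) wx).
Qed.

Lemma coef_bound_spanned n e C :
  coef_bound n e C -> finspan n e (e n) -> coef_bound n.+1 e C.
Proof.
move=> [C0 eC] [d en]; split => // _ [c ->].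
have ex : finspan n e (\sum_(i < n.+1) c i *: e i).
  exists (fun i => c i + c n * d i).
  rewrite big_ord_recr /= en scaler_sumr -big_split /=.
  by apply: eq_bigr => i _; rewrite scalerA scalerDl.
have [c' [xc' c'C]] := eC _ ex.
exists (fun i => if (i < n)%N then c' i else 0); split.
  rewrite {1}xc' big_ord_recr /= ltnn scale0r addr0.
  by apply: eq_bigr => i _; rewrite ltn_ord.
move=> i; rewrite ltnS leq_eqVlt => /orP[/eqP ->|i_n]; last by rewrite i_n; exact: c'C.
by rewrite ltnn normr0 mulr_ge0.
Qed.

Lemma finspan_sep_coef_le n e (v w : V) (a d : K) :
  (forall w, finspan n e w -> d <= `|v - w|) -> finspan n e w ->
  `|a| * d <= `|w + a *: v|.
Proof.
move=> vsep ew; have [->|a0] := eqVneq a 0; first by rewrite normr0 mul0r.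
have -> : w + a *: v = a *: (v - (- a^-1) *: w).
  by rewrite scaleNr opprK scalerDr scalerA mulfV // scale1r addrC.
by rewrite normrZ ler_wpM2l // vsep //; exact: finspanZ.
Qed.

Lemma coef_bound_separated n e C d :
  coef_bound n e C -> 0 < d -> (forall w, finspan n e w -> d <= `|e n - w|) ->
  coef_bound n.+1 e (C * (1 + `|e n| / d) + d^-1).
Proof.
move=> [C0 eC] d0 en_sep; set q := 1 + _.
have q_ge0 : 0 <= q by rewrite addr_ge0 // divr_ge0 // ltW.
split => [|_ [c ->]]; first by rewrite addr_ge0 ?mulr_ge0 // invr_ge0 ltW.
rewrite big_ord_recr /=; set w := \sum_(i < n) _; set x := w + _.
have ew : finspan n e w by exists c.
have cn_le : `|c n| <= d^-1 * `|x|.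
  rewrite -(ler_pM2l d0) mulrA mulfV ?gt_eqF // mul1r mulrC.
  exact: finspan_sep_coef_le en_sep ew.
have w_le : `|w| <= q * `|x|.
  rewrite -[w](addrK (c n *: e n)) -/x (le_trans (ler_normB _ _)) // normrZ.
  rewrite mulrDl mul1r lerD2l mulrC -mulrA ler_wpM2l //.
have [c' [wc' c'C]] := eC w ew.
exists (fun i => if (i < n)%N then c' i else c n); split.
  rewrite big_ord_recr /= ltnn /x {1}wc'; congr (_ + _).
  by apply: eq_bigr => i _; rewrite ltn_ord.
move=> i; rewrite ltnS leq_eqVlt => /orP[/eqP ->|i_n].
  by rewrite ltnn (le_trans cn_le) // ler_wpM2r // lerDr mulr_ge0.
rewrite i_n (le_trans (c'C i i_n)) // (le_trans (ler_wpM2l C0 w_le)) // mulrA.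
by rewrite ler_wpM2r // lerDl invr_ge0 ltW.
Qed.

Lemma coef_bound_exists n e : exists C, coef_bound n e C.
Proof.
elim: n => [|n [C eC]].
  by exists 0; split => // x [c ->]; exists c; split => // i; rewrite ltn0.
have [en|enN] := pselect (finspan n e (e n)).
  by exists C; exact: coef_bound_spanned.
have [d d0 en_sep] := finspan_dist_gt0 eC enN.
by exists (C * (1 + `|e n| / d) + d^-1); exact: coef_bound_separated.
Qed.

End finite_span.

Lemma findim_finspan (V : normedModType K) :
  findim V -> exists n (e : nat -> V), forall x, finspan n e x.
Proof.
move=> [n [e spanV]].
exists n, (fun i => if insub i is Some j then e j else 0) => x.
have [c ->] := spanV x; exists (fun i => if insub i is Some j then c j else 0).
by apply: eq_bigr => j _; rewrite valK.
Qed.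

Lemma findim_cvg_subseq (V : normedModType K) (u : V^nat) (M : K) :
  findim V -> (forall k, `|u k| <= M) ->
  exists2 f : nat -> nat, increasing_seq f & cvgn (u \o f).
Proof.
move=> /findim_finspan[n [e spanV]] uM.
have [C eC] := coef_bound_exists n e.
have [f incf [x _ ux]] := finspan_cvg_subseq eC (fun k => spanV (u k)) uM.
by exists f => //; apply/cvg_ex; exists x.
Qed.

Lemma findim_linear_continuous (V W : normedModType K) (f : {linear V -> W}) :
  findim V -> continuous f.
Proof.
move=> /findim_finspan[n [e spanV]].
have [C [C0 eC]] := coef_bound_exists n e.
pose B := C * \sum_(i < n) `|f (e i)|.
have B_ge0 : 0 <= B by rewrite mulr_ge0 ?sumr_ge0.
have fB x : `|f x| <= B * `|x|.
  have [c [xc cC]] := eC x (spanV x).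
  rewrite [in leLHS]xc linear_sum (le_trans (ler_norm_sum _ _ _)) // mulrAC mulr_sumr.
  by apply: ler_sum => i _; rewrite linearZ normrZ ler_wpM2r // cC.
apply/bounded_linear_continuous/bounded_funP => r; exists (B * r) => x xr.
by rewrite (le_trans (fB x)) // ler_wpM2l.
Qed.

Lemma findim_dual_subseq (V : normedModType K) (ys : nat -> {linear V -> K^o}) :
  findim V -> (forall k y, `|ys k y| <= `|y|) ->
  exists2 f : nat -> nat, increasing_seq f &
    exists g : {linear V -> K^o}, forall y, ys (f k) y @[k --> \oo] --> g y.
Proof.
move=> /findim_finspan[n [e spanV]] ys_le.
have [f incf [a ya]] := @bounded_seqs_subseq n (fun i k => ys k (e i))
  (fun i => `|e i|) (fun i k _ => ys_le k (e i)).
have /choice[c ec] := spanV.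
pose g (y : V) : K^o := \sum_(i < n) c y i * a i.
have ysg y : ys (f k) y @[k --> \oo] --> g y.
  have -> : (fun k => ys (f k) y) = fun k => \sum_(i < n) c y i * ys (f k) (e i).
    apply/funext => k; rewrite {1}(ec y) linear_sum.
    by apply: eq_bigr => i _; rewrite linearZ.
  apply: cvg_big; first exact: add_continuous.
  by move=> i _; apply: cvgMl_tmp; exact: ya.
have g_linear : linear g.
  move=> t y z; apply: (norm_cvg_unique (ysg (t *: y + z))) => /=.
  have -> : (fun k => ys (f k) (t *: y + z)) = fun k => t * ys (f k) y + ys (f k) z.
    by apply/funext => k; rewrite linearP.
  exact: cvgD (cvgMl_tmp (ysg y)) (ysg z).
exists f => //.
by exists (HB.pack_for {linear V -> K^o} g (GRing.isLinear.Build K V K^o *:%R g g_linear)).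
Qed.

Lemma dual_unit_cvg (V : normedModType K) (ys : nat -> {linear V -> K^o})
    (g : {linear V -> K^o}) :
  findim V -> (forall k, dual_unit (ys k)) ->
  (forall y, ys k y @[k --> \oo] --> g y) -> dual_unit g.
Proof.
move=> fV ys1 ysg; split=> [y y1|c c1].
  by apply: ler_cvg (cvg_norm (ysg y)) (cvg_cst _) => k; exact: (ys1 k).1.
have [cm m1] := midf_lt c1; set m := (c + 1) / 2 in cm m1.
have /choice[y yk] : forall k, exists y : V, `|y| <= 1 /\ m < `|(ys k y : K)|.
  by move=> k; exact: (ys1 k).2.
have [f incf /cvg_ex[x yx]] := findim_cvg_subseq fV (fun k => (yk k).1).
exists x; split.
  by apply: ler_cvg (cvg_norm yx) (cvg_cst _) => k; exact: (yk _).1.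
apply: lt_le_trans cm _; apply: ler_cvg (cvg_cst _) (cvg_norm (cvg_dual_apply _ yx _)).
- by move=> k; exact/ltW/(yk _).2.
- by move=> k; exact: dual_unit_le_norm.
- by move=> z; exact: cvg_subseq (ysg z).
Qed.

Section numerical_range.
Variables (X Y : normedModType K).
Hypotheses (fX : findim X) (fY : findim Y).

Lemma sphere_dual_subseq (xs : X^nat) (ys : nat -> {linear Y -> K^o}) :
  (forall k, `|xs k| = 1) -> (forall k, dual_unit (ys k)) ->
  exists2 f : nat -> nat, increasing_seq f &
    exists x (g : {linear Y -> K^o}), [/\ `|x| = 1, dual_unit g,
      xs \o f @ \oo --> x & forall y, ys (f k) y @[k --> \oo] --> g y].
Proof.
move=> xs1 ys1.
have xs_le1 k : `|xs k| <= 1 by rewrite xs1.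
have [f incf /cvg_ex[x xsx]] := findim_cvg_subseq fX xs_le1.
have [h inch [g ysg]] :=
  findim_dual_subseq fY (fun k => dual_unit_le_norm (ys1 (f k))).
exists (f \o h); first exact: increasing_seq_comp.
exists x, g; split.
- apply: (norm_cvg_unique (cvg_norm xsx)) => /=.
  rewrite (_ : (fun k => _) = fun=> 1); first exact: cvg_cst.
  by apply/funext => k; exact: xs1.
- by apply: (dual_unit_cvg (ys := ys \o (f \o h)) fY _ ysg) => k; exact: ys1.
- exact: (cvg_subseq inch xsx).
- exact: ysg.
Qed.

(* [phi x ys] is [`|G x|] for S_G and [re (ys (G x))] for V_G. *)
Lemma numrange_closure_limit (T : {linear X -> Y}) (phi : X -> {linear Y -> K^o} -> K)
    (z : K) :
  (\bigcap_(d in [set d : K | 0 < d]) closure [set z | exists x ys,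
      `|x| = 1 /\ dual_unit ys /\ 1 - d < phi x ys /\ z = ys (T x)]) z ->
  exists xs ys (e : K^nat) x (g : {linear Y -> K^o}),
    [/\ forall k, dual_unit (ys k), e @ \oo --> 0,
        forall k, 1 - e k < phi (xs k) (ys k), xs @ \oo --> x &
        forall y, ys k y @[k --> \oo] --> g y] /\
    [/\ `|x| = 1, dual_unit g & z = g (T x)].
Proof.
move=> z_cl.
have /choice[p pz] k : exists p : X * {linear Y -> K^o}, [/\ `|p.1| = 1, dual_unit p.2,
    1 - harmonic k < phi p.1 p.2 & `|z - p.2 (T p.1)| < harmonic k].
  have [_ [x [ys [x1 [ys1 [phi_x ->]]]]] zk] :=
    closure_dist_lt (z_cl _ (harmonic_gt0 k)) (harmonic_gt0 k).
  by exists (x, ys).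
have p_sphere k : `|(p k).1| = 1 by case: (pz k).
have p_dual k : dual_unit (p k).2 by case: (pz k).
have p_phi k : 1 - harmonic k < phi (p k).1 (p k).2 by case: (pz k).
have p_z k : `|z - (p k).2 (T (p k).1)| < harmonic k by case: (pz k).
have [f incf [x [g [x1 g1 xsx ysg]]]] := sphere_dual_subseq p_sphere p_dual.
exists (fun k => (p (f k)).1), (fun k => (p (f k)).2), (harmonic \o f), x, g.
split; split=> //.
- exact: cvg_subseq incf harmonic_cvg0.
- by move=> k; exact: p_phi.
- apply: (norm_cvg_unique (cvg_subseq incf (cvg_harmonic_dist p_z))).
  have Tcont := findim_linear_continuous (f := T) fX.
  have ys_le k := dual_unit_le_norm (p_dual (f k)).
  exact: (cvg_dual_apply ys_le (cvg_comp _ _ xsx (Tcont x)) ysg).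
Qed.

Lemma attained_in_numrange (T : {linear X -> Y}) (phi : X -> {linear Y -> K^o} -> K)
    (x : X) (ys : {linear Y -> K^o}) :
  `|x| = 1 -> dual_unit ys -> 1 <= phi x ys ->
  (\bigcap_(d in [set d : K | 0 < d]) closure [set z | exists x ys,
      `|x| = 1 /\ dual_unit ys /\ 1 - d < phi x ys /\ z = ys (T x)]) (ys (T x)).
Proof.
move=> x1 ys1 phi_ge1 d d0; apply: subset_closure; exists x, ys; do 3!split => //.
by rewrite ltrBlDr (le_lt_trans phi_ge1) // ltrDl.
Qed.

Variables (G T : {linear X -> Y}).
Hypothesis G1 : opnorm_eq1 G.

Let G_le x : `|G x| <= `|x| := linear_le_norm G1.1 x.
Let Gcont : continuous G := findim_linear_continuous fX.

Lemma SG_attained : SG G T =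
  [set z | exists x ys, `|x| = 1 /\ dual_unit ys /\ `|G x| = 1 /\ z = ys (T x)].
Proof.
apply/seteqP; split=> [z|]; last first.
  by move=> _ [x [ys [x1 [ys1 [Gx1 ->]]]]]; apply: attained_in_numrange; rewrite ?Gx1.
move=> /(numrange_closure_limit (T := T) (phi := fun x _ => `|G x|)).
move=> [xs [ys [e [x [g [[_ e0 approx xsx _] [x1 g1 ->]]]]]]].
exists x, g; do 3!split => //; apply/eqP; rewrite eq_le -{1}x1 G_le /=.
apply: (approx_cvg_ge1 (u := fun k => `|G (xs k)|) e0 approx).
apply: cvg_norm; exact: cvg_comp _ _ xsx (@Gcont x).
Qed.

Variable re : K -> K.
Hypothesis re_nonexpansive : forall a b, `|re a - re b| <= `|a - b|.
Hypothesis re1 : re 1 = 1.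
Hypothesis unit_ball_re_ge1 : forall w, `|w| <= 1 -> 1 <= re w -> w = 1.

Lemma VG_attained : VG re G T =
  [set z | exists x ys, `|x| = 1 /\ dual_unit ys /\ ys (G x) = 1 /\ z = ys (T x)].
Proof.
apply/seteqP; split=> [z|]; last first.
  by move=> _ [x [ys [x1 [ys1 [Gx1 ->]]]]]; apply: attained_in_numrange; rewrite ?Gx1 ?re1.
move=> /(numrange_closure_limit (T := T) (phi := fun x ys => re (ys (G x)))).
move=> [xs [ys [e [x [g [[ys1 e0 approx xsx ysg] [x1 g1 ->]]]]]]].
exists x, g; do 3!split => //; apply: unit_ball_re_ge1.
  by rewrite (le_trans (dual_unit_le_norm g1 _)) // -x1 G_le.
have ys_le k := dual_unit_le_norm (ys1 k).
have w_cvg := cvg_dual_apply ys_le (cvg_comp _ _ xsx (@Gcont x)) ysg.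
apply: (approx_cvg_ge1 (u := fun k => re (ys k (G (xs k)))) e0 approx).
exact: cvg_nonexpansive re_nonexpansive w_cvg.
Qed.

End numerical_range.

End finite_dimension.

Lemma numranges_attained (K : numFieldType) (re : K -> K) :
  @harmonic K @ \oo --> 0 ->
  (forall (u : K^nat) (M : K), (forall n, `|u n| <= M) ->
    exists2 f : nat -> nat, increasing_seq f & cvgn (u \o f)) ->
  (forall a b, `|re a - re b| <= `|a - b|) -> re 1 = 1 ->
  (forall w, `|w| <= 1 -> 1 <= re w -> w = 1) ->
  prop2p4_stmt re.
Proof.
move=> harmonic_cvg0 bolzano re_nonexpansive re1 unit_ball_re_ge1 X Y fX fY G T G1.
by split; [exact: SG_attained | exact: VG_attained].
Qed.

Lemma bolzano_real (R : realType) (u : R^nat) (M : R) :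
  (forall n, `|u n| <= M) -> exists2 f : nat -> nat, increasing_seq f & cvgn (u \o f).
Proof.
move=> uM; apply: bolzano_weierstrass; exists M; split.
  exact: ger0_real (le_trans (normr_ge0 _) (uM 0%N)).
by move=> N MN n _; exact: le_trans (uM n) (ltW MN).
Qed.

Section complex_numbers.
Variable R : realType.
Local Open Scope complex_scope.
Local Notation C := (R[i] : numFieldType).

Lemma normc_real (x : R) : `|x%:C| = `|x|%:C.
Proof. by rewrite normc_def /= expr0n addr0 sqrtr_sqr. Qed.

Lemma cvg_real_complex (u : R^nat) (a : R) :
  u @ \oo --> a -> (fun n => (u n)%:C : C) @ \oo --> (a%:C : C).
Proof.
move=> ua; apply/cvgrPdist_lt => e e0.
have e_real : (complex.Re e)%:C = e := RRe_real (gtr0_real e0).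
have Re_e0 : 0 < complex.Re e by rewrite -ltcR e_real.
near=> n; rewrite -rmorphB normc_real -e_real ltcR.
by near: n; apply: cvgr_dist_lt.
Unshelve. all: by end_near. Qed.

Lemma cvg_harmonic_complex : @harmonic C @ \oo --> 0.
Proof.
have -> : @harmonic C = fun n => (harmonic n)%:C.
  by apply/funext => n; rewrite /= fmorphV rmorph_nat.
exact: cvg_real_complex cvg_harmonic.
Qed.

Lemma bolzano_complex (u : C^nat) (M : C) :
  (forall n, `|u n| <= M) -> exists2 f : nat -> nat, increasing_seq f & cvgn (u \o f).
Proof.
move=> uM; have M_real : (complex.Re M)%:C = M.
  exact: RRe_real (ger0_real (le_trans (normr_ge0 _) (uM 0%N))).
have Re_le n : `|complex.Re (u n)| <= complex.Re M.
  by rewrite -lecR M_real (le_trans (normc_ge_Re _) (uM n)).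
have Im_le n : `|complex.Im (u n)| <= complex.Re M.
  rewrite -lecR M_real -normrN -ReiNIm (le_trans (normc_ge_Re _)) //.
  by rewrite normrM (_ : `|'i%C| = 1) ?mulr1 // normc_def /= expr0n expr1n add0r sqrtr1.
have [f incf /cvg_ex[a ua]] := bolzano_real Re_le.
have [g incg /cvg_ex[b ub]] := bolzano_real (fun n => Im_le (f n)).
exists (f \o g); first exact: increasing_seq_comp.
apply/cvg_ex; exists (a%:C + 'i%C * b%:C : C).
have -> : u \o (f \o g) =
    fun n => (complex.Re (u (f (g n))))%:C + 'i%C * (complex.Im (u (f (g n))))%:C : C.
  by apply/funext => n; rewrite /= -complexE.
apply: cvgD; first exact: cvg_real_complex (cvg_subseq incg ua).
by apply: cvgMl_tmp; exact: cvg_real_complex ub.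
Qed.

End complex_numbers.

Lemma normC_ReB (C : numClosedFieldType) (a b : C) : `|'Re a - 'Re b| <= `|a - b|.
Proof. by rewrite -raddfB; exact: (leif_normC_Re_Creal (a - b)).1. Qed.

Lemma Re_ge1_unit_ball (C : numClosedFieldType) (w : C) : `|w| <= 1 -> 1 <= 'Re w -> w = 1.
Proof.
move=> w1 w_ge1; have [Re_le_norm Re_eq_norm] := leif_Re_Creal w.
have Re_norm : 'Re w = `|w| by apply/le_anti; rewrite Re_le_norm (le_trans w1 w_ge1).
have w_ge0 : 0 <= w by rewrite -Re_eq_norm Re_norm eqxx.
have /Creal_ReP <- := ger0_real w_ge0.
by apply/le_anti; rewrite w_ge1 Re_norm w1.
Qed.

Theorem proposition2p4 (R : realType) :
  prop2p4_stmt (fun x : R => x) /\ prop2p4_stmt (fun z : R[i] => 'Re z).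
Proof.
split; apply: numranges_attained.
- exact: cvg_harmonic.
- exact: bolzano_real.
- by [].
- by [].
- by move=> w w1 w_ge1; apply/le_anti; rewrite w_ge1 (le_trans (ler_norm w) w1).
- exact: cvg_harmonic_complex.
- exact: bolzano_complex.
- exact: normC_ReB.
- by apply/Creal_ReP; exact: rpred1.
- exact: Re_ge1_unit_ball.
Qed.
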